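(* Fix $M$, integers $L,l$, and a job set $J$ with $L\ge D(J)$, and let $h$ be a hash function that is $(L,l)$-good for $J$. Then, for any starting positions of the jobs and any choices of which eligible job to work on, the algorithm StatelessWeakScheduler run on $J$ with parameters $L,l,h$ completes at least half of the jobs within $2Ll$ time steps.
   Context: Job-shop scheduling with unit jobs: machines $M$; jobs $J$ with sequences $\mathrm{seq}(j)\in M^*$, unique identifiers $\mathrm{ind}(j)\in I=\{1,\dots,|M|^c\}$ and positions $\mathrm{pos}(j)_t\in\{0,\dots,\mathrm{len}(\mathrm{seq}(j))\}$ (completed at the last value; here initial positions are arbitrary); $\mathrm{que}(m)_t=\{j:\mathrm{seq}(j)_{\mathrm{pos}(j)_t}=m\}$; each step each machine works on at most one job in its queue, which advances one position. $D(J)=\max_j\mathrm{len}(\mathrm{seq}(j))$. For $h:M^*\times I\to\{0,\dots,L-1\}$ with $h(j):=h(\mathrm{seq}(j),\mathrm{ind}(j))$: $\mathrm{virt}(j,i)=h(j)+i$ for $i<\mathrm{len}(\mathrm{seq}(j))$ and $\infty$ otherwise; $\mathrm{virt}(j)_t=\mathrm{virt}(j,\mathrm{pos}(j)_t)$. StatelessWeakScheduler$(m,L,l,h,t)$ at time $t$ (counted from the subroutine's start): $T=\lfloor t/l\rfloor$, $Q=\{j\in\mathrm{que}(m)_t:\mathrm{virt}(j)_t=T\}$; if $0<|Q|\le l$ machine $m$ works on an arbitrary $j\in Q$, else does nothing. Bad pattern (for fixed $M,L,l,J$): sets $B_{T,m}$, $0\le T<2L$, $m\in M$, of (job, position) pairs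 with $\mathrm{seq}(j)_i=m$ for $(j,i)\in B_{T,m}$; each $j\in J$ appears at most once in $\bigsqcup B_{T,m}$; $|B_{T,m}|\in\{0\}\cup(l,|J|]$; $\sum|B_{T,m}|>|J|/2$. It occurs for $h$ if $\mathrm{virt}(j,i)=T$ for all $(j,i)\in B_{T,m}$ and all $(T,m)$. $h$ is $(L,l)$-good for $J$ if no bad pattern occurs for $h$. *)

From mathcomp Require Import all_boot.
Set Implicit Arguments. Unset Strict Implicit. Unset Printing Implicit Defensive.

Section JobShop.
(* Hash function h : seq M -> nat -> nat (only its values on the identifier
   range I = {1,..,|M|^c} matter; range conditions are hypotheses). *)
Variables (M J : finType) (sq : J -> seq M) (ind : J -> nat).
Variable h : seq M -> nat -> nat.

Definition hj (j : J) : nat := h (sq j) (ind j).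

Definition Dmax : nat := \max_(j : J) size (sq j).

(* virt(j,i) = T, where virt(j,i) = h(j)+i if i < len(seq j), and infinity
   otherwise (so it never equals a natural number T). *)
Definition virt_eq (j : J) (i T : nat) : bool :=
  (i < size (sq j)) && (hj j + i == T).

(* j \in que(m) at positions pos: seq(j)_{pos j} = m (undefined if completed) *)
Definition in_que (pos : J -> nat) (m : M) (j : J) : bool :=
  onth (sq j) (pos j) == Some m.

Definition Qset (l t : nat) (pos : J -> nat) (m : M) : {set J} :=
  [set j | in_que pos m j & virt_eq j (pos j) (t %/ l)].

(* One step of StatelessWeakScheduler(m,L,l,h,t) at time t, run on all
   machines simultaneously, with an arbitrary choice [sel] among eligible jobs:
   positions [pos] become [pos']. *)
Definition sws_step (l t : nat) (pos pos' : J -> nat) : Prop :=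
  exists sel : M -> option J,
    (forall m, if (0 < #|Qset l t pos m| <= l)
               then exists2 j, sel m = Some j & j \in Qset l t pos m
               else sel m = None) /\
    (forall j, pos' j = if [exists m, sel m == Some j] then (pos j).+1 else pos j).

Definition sws_run (l : nat) (pos : nat -> J -> nat) : Prop :=
  (forall j, pos 0 j <= size (sq j)) /\
  (forall t, sws_step l t (pos t) (pos t.+1)).

Definition bad_pattern (L l : nat) (B : 'I_(2 * L) -> M -> seq (J * nat)) : Prop :=
  [/\ forall T m, uniq (B T m),
      forall T m p, p \in B T m -> onth (sq p.1) p.2 = Some m,
      forall T m T' m' p p', p \in B T m -> p' \in B T' m' -> p.1 = p'.1 ->
        [/\ T = T', m = m' & p = p'],
      forall T m, size (B T m) = 0 \/ l < size (B T m) <= #|J|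
    & #|J| < 2 * (\sum_(T < 2 * L) \sum_(m : M) size (B T m))].

Definition pattern_occurs (L : nat) (B : 'I_(2 * L) -> M -> seq (J * nat)) : Prop :=
  forall T m p, p \in B T m -> virt_eq p.1 p.2 T.

Definition good_hash (L l : nat) : Prop :=
  forall B : 'I_(2 * L) -> M -> seq (J * nat),
    @bad_pattern L l B -> ~ @pattern_occurs L B.

End JobShop.

(* Suppose fewer than half of the jobs are finished at time N = 2Ll, and group
   the unfinished ones by their virtual time V = h(j) + pos_N(j) < 2L and their
   current machine m.  A job of group (V, m) cannot have moved since the start
   of phase V (a move in phase V' >= V would push its virtual time past V), so
   it waited in the queue Q of m during the whole phase V.  A queue with at most
   l jobs loses one job per step and would have served it, so Q had more than l
   jobs; then no job of Q moves during phase V, after which they are all behind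
   schedule and stuck, so all of Q lies in group (V, m).  Every nonempty group
   thus has more than l jobs, and the groups form a bad pattern occurring for h. *)

From mathcomp Require Import all_boot zify.
Set Implicit Arguments. Unset Strict Implicit. Unset Printing Implicit Defensive.

Lemma card_bigcup_le (I T : finType) (P : pred I) (F : I -> {set T}) :
  #|\bigcup_(i | P i) F i| <= \sum_(i | P i) #|F i|.
Proof.
elim/big_ind2: _ => [|m A n B leA leB|//]; first by rewrite cards0.
by rewrite (leq_trans (leq_card_setU A B)) ?leq_add.
Qed.

Lemma phase_div l V k : k < l -> (V * l + k) %/ l = V.
Proof. by move=> lt_kl; rewrite divnMDl ?divn_small ?addn0 //; apply: leq_ltn_trans lt_kl. Qed.

Section Queues.
Variables (M J : finType) (sq : J -> seq M) (ind : J -> nat) (h : seq M -> nat -> nat).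

Definition finished (p : J -> nat) : {set J} := [set j | p j == size (sq j)].

Definition vqueue (p : J -> nat) (V : nat) (m : M) : {set J} :=
  [set j | in_que sq p m j & virt_eq sq ind h j (p j) V].

Lemma mem_vqueue p V m j :
  (j \in vqueue p V m) =
  [&& onth (sq j) (p j) == Some m, p j < size (sq j) & hj sq ind h j + p j == V].
Proof. by rewrite inE. Qed.

Lemma vqueue_pos_eq p p' V m j :
  p' j = p j -> (j \in vqueue p' V m) = (j \in vqueue p V m).
Proof. by move=> ej; rewrite !mem_vqueue ej. Qed.

Lemma vqueue_virt p V m j : j \in vqueue p V m -> hj sq ind h j + p j = V.
Proof. by rewrite mem_vqueue => /and3P[_ _ /eqP]. Qed.

Lemma QsetE l t p m : Qset sq ind h l t p m = vqueue p (t %/ l) m.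
Proof. by []. Qed.

Lemma card_unfinished_le p L :
  (forall j, p j <= size (sq j)) ->
  (forall j, p j < size (sq j) -> hj sq ind h j + p j < 2 * L) ->
  #|~: finished p| <= \sum_(T < 2 * L) \sum_(m : M) #|vqueue p T m|.
Proof.
move=> p_le virt_lt.
have cover : ~: finished p \subset \bigcup_(T < 2 * L) \bigcup_(m : M) vqueue p T m.
  apply/subsetP => j; rewrite !inE => unfinished.
  have lt_p : p j < size (sq j) by rewrite ltn_neqAle unfinished p_le.
  have [m onth_m] : exists m, onth (sq j) (p j) = Some m.
    by move: (onthTE (sq j) (p j)); rewrite lt_p; case: onth => // m _; exists m.
  apply/bigcupP; exists (Ordinal (virt_lt j lt_p)) => //.
  by apply/bigcupP; exists m; rewrite // mem_vqueue onth_m lt_p /= !eqxx.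
apply: leq_trans (subset_leq_card cover) _.
apply: leq_trans (card_bigcup_le _ _) _.
by apply: leq_sum => T _; apply: card_bigcup_le.
Qed.

Definition queue_pattern (p : J -> nat) (L : nat) (T : 'I_(2 * L)) (m : M) : seq (J * nat) :=
  [seq (j, p j) | j <- enum (vqueue p T m)].

Lemma mem_queue_pattern p L (T : 'I_(2 * L)) m q :
  (q \in queue_pattern p T m) = (q.1 \in vqueue p T m) && (q.2 == p q.1).
Proof.
case: q => j i /=; apply/mapP/andP => [[j' + [-> ->]]|[Qj /eqP->]].
  by rewrite mem_enum.
by exists j; rewrite ?mem_enum.
Qed.

Lemma size_queue_pattern p L (T : 'I_(2 * L)) m : size (queue_pattern p T m) = #|vqueue p T m|.
Proof. by rewrite size_map cardE. Qed.

Lemma queue_pattern_occurs p L : pattern_occurs sq ind h (queue_pattern p (L := L)).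
Proof.
move=> T m [j i]; rewrite mem_queue_pattern /= => /andP[Qj /eqP->].
by move: Qj; rewrite inE => /andP[].
Qed.

Lemma queue_pattern_bad p L l :
  (forall (T : 'I_(2 * L)) m, 0 < #|vqueue p T m| -> l < #|vqueue p T m|) ->
  #|J| < 2 * \sum_(T < 2 * L) \sum_(m : M) #|vqueue p T m| ->
  bad_pattern sq l (queue_pattern p (L := L)).
Proof.
move=> crowded many; split.
- by move=> T m; rewrite map_inj_uniq ?enum_uniq // => j j' [].
- move=> T m [j i]; rewrite mem_queue_pattern /= => /andP[+ /eqP->].
  by rewrite mem_vqueue => /and3P[/eqP].
- move=> T m T' m' [j i] [j' i']; rewrite !mem_queue_pattern /=.
  move=> /andP[Qj /eqP->] /andP[Q'j /eqP->] ej; subst j'.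
  move: Qj Q'j; rewrite !mem_vqueue => /and3P[/eqP-> _ /eqP eT] /and3P[/eqP[->] _ /eqP eT'].
  by split => //; apply: val_inj; rewrite /= -eT -eT'.
- move=> T m; rewrite size_queue_pattern.
  by have [->|/crowded] := posnP #|vqueue p T m|; [left | right; rewrite max_card andbT].
- by under eq_bigr do under eq_bigr do rewrite size_queue_pattern.
Qed.

Section Run.
Variables (l : nat) (pos : nat -> J -> nat).
Hypothesis run : sws_run sq ind h l pos.

Local Notation Q t m := (Qset sq ind h l t (pos t) m).
Local Notation virt j := (hj sq ind h j).

Lemma run_moved t j :
  pos t.+1 j != pos t j ->
  pos t.+1 j = (pos t j).+1 /\ exists2 m, j \in Q t m & #|Q t m| <= l.
Proof.
have [sel [sel_spec pos_next]] := run.2 t.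
rewrite pos_next; case: existsP => [[m /eqP sel_m] _|_]; last by rewrite eqxx.
split=> //; move: (sel_spec m); case: ifP => [/andP[_ small]|_];
  last by rewrite sel_m.
by rewrite sel_m => -[_ [<-] Qj]; exists m.
Qed.

Lemma run_moved_virt t j :
  pos t.+1 j != pos t j -> pos t.+1 j = (pos t j).+1 /\ virt j + pos t j = t %/ l.
Proof.
move=> /run_moved[-> [m]]; rewrite QsetE mem_vqueue => /and3P[_ _ /eqP virt_t] _.
by split.
Qed.

Lemma run_worked t m :
  0 < #|Q t m| <= l -> exists2 j, j \in Q t m & pos t.+1 j = (pos t j).+1.
Proof.
have [sel [sel_spec pos_next]] := run.2 t.
move=> eligible; move: (sel_spec m); rewrite eligible => -[j sel_m Qj].
exists j; rewrite // pos_next; case: existsP => // -[]; exists m; by rewrite sel_m.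
Qed.

Lemma run_crowded_stay t m j : l < #|Q t m| -> j \in Q t m -> pos t.+1 j = pos t j.
Proof.
move=> crowded Qj; apply/eqP; apply: contraT => /run_moved[_ [m' Q'j small]].
suff em : m' = m by move: crowded; rewrite -em ltnNge small.
by move: Qj Q'j; rewrite !QsetE !mem_vqueue => /and3P[/eqP-> _ _] /and3P[/eqP[] ->].
Qed.

Lemma run_pos_le_size t j : pos t j <= size (sq j).
Proof.
elim: t => [|t IH]; first exact: run.1.
have [-> //|/run_moved[-> [m]]] := eqVneq (pos t.+1 j) (pos t j).
by rewrite QsetE mem_vqueue => /and3P[].
Qed.

Lemma run_pos_step t j : pos t j <= pos t.+1 j.
Proof.
by have [-> //|/run_moved_virt[-> _]] := eqVneq (pos t.+1 j) (pos t j).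
Qed.

Lemma run_pos_mono j : {homo pos^~ j : s t / s <= t}.
Proof. by apply: homo_leq => [//|???|t]; [apply: leq_trans | apply: run_pos_step]. Qed.

Lemma run_moved_before s t j : s <= t -> pos s j < pos t j -> s %/ l < virt j + pos t j.
Proof.
move=> le_st; elim: t le_st => [|t IH]; first by rewrite leqn0 => /eqP->; rewrite ltnn.
rewrite leq_eqVlt ltnS => /predU1P[-> |le_st]; first by rewrite ltnn.
have [-> //|/run_moved_virt[-> virt_t] _] := eqVneq (pos t.+1 j) (pos t j).
  exact: IH.
by rewrite addnS ltnS virt_t leq_div2r.
Qed.

Lemma run_pos_settled s t j : s <= t -> virt j + pos t j <= s %/ l -> pos s j = pos t j.
Proof.
move=> le_st settled; apply/eqP; rewrite eqn_leq run_pos_mono //= leqNgt.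
by apply: contraTN settled => /(run_moved_before le_st); rewrite -ltnNge.
Qed.

Lemma run_late_stuck s t j : s <= t -> virt j + pos s j < s %/ l -> pos t j = pos s j.
Proof.
move=> le_st late; elim: t le_st => [|t IH]; first by rewrite leqn0 => /eqP->.
rewrite leq_eqVlt ltnS => /predU1P[-> //|le_st].
have [-> //|/run_moved_virt[_ virt_t]] := eqVneq (pos t.+1 j) (pos t j); first exact: IH.
by move: late; rewrite -(IH le_st) virt_t ltnNge leq_div2r.
Qed.

Lemma Qset_step_sub t m :
  t.+1 %/ l = t %/ l -> Q t.+1 m \subset [set j in Q t m | pos t.+1 j == pos t j].
Proof.
move=> same_phase; apply/subsetP => j Q'j; rewrite inE.
have [stay|/run_moved_virt[moved virt_t]] := eqVneq (pos t.+1 j) (pos t j).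
  by rewrite andbT QsetE -same_phase -(vqueue_pos_eq _ _ stay).
by have := vqueue_virt Q'j; rewrite moved addnS virt_t same_phase; lia.
Qed.

Lemma Qset_step_shrink t m :
  t.+1 %/ l = t %/ l -> 0 < #|Q t m| <= l -> #|Q t.+1 m| < #|Q t m|.
Proof.
move=> same_phase /run_worked[j0 Qj0 moved].
have sub : Q t.+1 m \subset Q t m :\ j0.
  apply/subsetP => j /(subsetP (Qset_step_sub m same_phase)).
  rewrite !inE => /andP[Qj stay]; rewrite Qj andbT.
  by apply: contraTneq stay => ->; rewrite moved gtn_eqF.
by rewrite [#|Q t m|](cardsD1 j0) Qj0 add1n ltnS subset_leq_card.
Qed.

Lemma Qset_step_crowded t m :
  t.+1 %/ l = t %/ l -> l < #|Q t m| -> Q t.+1 m = Q t m.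
Proof.
move=> same_phase crowded; apply/eqP; rewrite eqEsubset; apply/andP; split.
  by apply: subset_trans (Qset_step_sub m same_phase) _; apply/subsetP => j /setIdP[].
apply/subsetP => j Qj; have stay := run_crowded_stay crowded Qj.
by rewrite QsetE same_phase (vqueue_pos_eq _ _ stay).
Qed.

Section Phase.
Hypothesis l_gt0 : 0 < l.
Variables (V : nat) (m : M).

Lemma phase_step k : k.+1 < l -> (V * l + k).+1 %/ l = (V * l + k) %/ l.
Proof. by move=> lt_k; rewrite -addnS !phase_div // ltnW. Qed.

Lemma Qset_phase_drain k : k < l -> #|Q (V * l) m| <= l -> #|Q (V * l + k) m| + k <= l.
Proof.
move=> lt_k small; elim: k lt_k => [|k IH] lt_k; first by rewrite !addn0.
have {}IH := IH (ltnW lt_k); rewrite [V * l + k.+1]addnS; have same_phase := phase_step lt_k.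
have le_next : #|Q (V * l + k).+1 m| <= #|Q (V * l + k) m|.
  by apply/subset_leq_card/(subset_trans (Qset_step_sub m same_phase))/subsetP => j /setIdP[].
have [empty|nonempty] := posnP #|Q (V * l + k) m|; first lia.
have eligible : 0 < #|Q (V * l + k) m| <= l by rewrite nonempty /=; lia.
by have := Qset_step_shrink same_phase eligible; lia.
Qed.

Lemma Qset_phase_crowded k : k < l -> l < #|Q (V * l) m| -> Q (V * l + k) m = Q (V * l) m.
Proof.
move=> lt_k crowded; elim: k lt_k => [|k IH] lt_k; first by rewrite addn0.
by rewrite addnS Qset_step_crowded ?phase_step ?IH ?(ltnW lt_k).
Qed.

Lemma Qset_phase_blocked j :
  j \in Q (V * l) m -> pos (V * l + l) j = pos (V * l) j -> l < #|Q (V * l) m|.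
Proof.
move=> Qj blocked; rewrite ltnNge; apply/negP => small.
have const k : k <= l -> pos (V * l + k) j = pos (V * l) j.
  move=> le_k; apply/eqP; rewrite eqn_leq -[X in _ <= X]blocked.
  by rewrite !run_pos_mono ?leq_add2l ?leq_addr.
have Qk k : k < l -> j \in Q (V * l + k) m.
  move=> lt_k; move: Qj; rewrite !QsetE phase_div // mulnK //.
  by rewrite (vqueue_pos_eq _ _ (const k (ltnW lt_k))).
have last_lt : l.-1 < l by rewrite prednK.
have le1 : #|Q (V * l + l.-1) m| <= 1.
  by rewrite -(leq_add2r l.-1) add1n prednK // Qset_phase_drain.
have eligible : 0 < #|Q (V * l + l.-1) m| <= l.
  by rewrite (leq_trans le1 l_gt0) andbT; apply/card_gt0P; exists j; apply: Qk.
have [j0 Qj0 moved] := run_worked eligible.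
move: moved; rewrite -(card_le1_eqP le1 _ _ Qj0 (Qk _ last_lt)) -addnS prednK //.
by rewrite !const ?leqnn ?leq_pred //; lia.
Qed.

Lemma Qset_phase_stuck j t :
  l < #|Q (V * l) m| -> j \in Q (V * l) m -> V.+1 * l <= t -> pos t j = pos (V * l) j.
Proof.
move=> crowded Qj le_t.
have last_lt : l.-1 < l by rewrite prednK.
have Q_last : j \in Q (V * l + l.-1) m by rewrite Qset_phase_crowded.
have crowded_last : l < #|Q (V * l + l.-1) m| by rewrite Qset_phase_crowded.
have virt_start : virt j + pos (V * l) j = V by move: Qj; rewrite QsetE mulnK // => /vqueue_virt.
have virt_last : virt j + pos (V * l + l.-1) j = V.
  by move: Q_last; rewrite QsetE phase_div // => /vqueue_virt.
have end_phase : (V * l + l.-1).+1 = V.+1 * l by rewrite -addnS prednK // mulSnr.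
have stay := run_crowded_stay crowded_last Q_last; rewrite end_phase in stay.
have same_pos : pos (V.+1 * l) j = pos (V * l) j by move: virt_start; rewrite stay; lia.
rewrite -same_pos; apply: run_late_stuck => //.
by rewrite same_pos virt_start mulnK.
Qed.

End Phase.

Lemma run_vqueue_crowded N V m :
  V.+1 * l <= N -> 0 < #|vqueue (pos N) V m| -> l < #|vqueue (pos N) V m|.
Proof.
have [-> //|l_gt0] := posnP l; move=> le_N /card_gt0P[j Nj].
have settled t : V * l <= t <= N -> pos t j = pos N j.
  case/andP=> le_t le_tN; apply: run_pos_settled => //.
  by rewrite (vqueue_virt Nj) leq_divRL.
have le_VN : V * l <= N by apply: leq_trans le_N; rewrite leq_mul2r leqnSn orbT.
have Qj : j \in Q (V * l) m.
  by rewrite QsetE mulnK // (vqueue_pos_eq _ _ (settled _ _)) ?leqnn.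
have blocked : pos (V * l + l) j = pos (V * l) j.
  by rewrite !settled ?leqnn ?leq_addr -?mulSnr.
have crowded := Qset_phase_blocked l_gt0 Qj blocked.
apply: (leq_trans crowded); apply/subset_leq_card/subsetP => x Qx.
rewrite (vqueue_pos_eq _ _ (Qset_phase_stuck l_gt0 crowded Qx le_N)).
by move: Qx; rewrite QsetE mulnK.
Qed.

End Run.
End Queues.

Theorem lemma5p14
  (M J : finType) (c : nat) (sq : J -> seq M) (ind : J -> nat)
  (h : seq M -> nat -> nat) (L l : nat)
  (ind_inj : injective ind)
  (ind_range : forall j, 1 <= ind j <= #|M| ^ c)
  (h_range : forall s i, 1 <= i <= #|M| ^ c -> h s i < L)
  (hLD : Dmax sq <= L)
  (hgood : good_hash sq ind h L l)
  (pos : nat -> J -> nat)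
  (hrun : sws_run sq ind h l pos) :
  #|J| <= 2 * #|[set j | pos (2 * L * l) j == size (sq j)]|.
Proof.
set N := 2 * L * l.
have unfinished_virt j : pos N j < size (sq j) -> hj sq ind h j + pos N j < 2 * L.
  have := h_range (sq j) _ (ind_range j); have : size (sq j) <= L.
    exact: leq_trans (leq_bigmax j) hLD.
  rewrite /hj; lia.
rewrite leqNgt; apply/negP => few_finished.
apply: (hgood (queue_pattern sq ind h (pos N) (L := L))); last exact: queue_pattern_occurs.
apply: queue_pattern_bad => [T m|].
  by apply: (run_vqueue_crowded hrun); rewrite /N leq_mul2r ltn_ord orbT.
have := card_unfinished_le (run_pos_le_size hrun N) unfinished_virt.
by have := cardsC (finished sq (pos N)); rewrite /finished in few_finished *; lia.
Qed.
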